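(* Let $q$ be an odd prime and $a\in(\mathbb{Z}/q\mathbb{Z})^\times$. (i) If $q\ne5$, or if $q=5$ and $a\ne 3+5\mathbb{Z}$, then there exists $x\in(\mathbb{Z}/q\mathbb{Z})^\times$ such that $\left(\frac{x+a/x}{q}\right)\ne1$. (ii) If $q\notin\{7,13\}$, then there exists $x\in(\mathbb{Z}/q\mathbb{Z})^\times$ such that $\left(\frac{x^6+a}{q}\right)\ne1$.
   Context: $\left(\frac{\cdot}{q}\right)$ denotes the Legendre symbol modulo $q$ (taking value $0$ on the zero class). *)

From mathcomp Require Import all_boot all_algebra.
Set Implicit Arguments. Unset Strict Implicit. Unset Printing Implicit Defensive.
Import GRing.Theory.
Local Open Scope ring_scope.

Definition legendre (p : nat) (x : 'F_p) : int :=
  if x == 0 then 0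
  else if [exists y : 'F_p, y ^+ 2 == x] then 1 else -1.

From mathcomp Require Import all_boot all_order all_algebra finfield.
From mathcomp Require Import zify ring.
Import Order.TTheory GRing.Theory Num.Theory.
Local Open Scope ring_scope.

(* Let chi be the quadratic character of a finite field of odd order q.
   If chi (x + a/x) = 1 for all x != 0, the sum phi b := sum_x chi x chi (x^2 + b)
   equals q - 1 at b = a, and phi (a t^2) = chi t phi a for t != 0.  The
   orthogonality relation sum_b chi (u + b) chi (v + b) = q [u = v] - 1 bounds
   the second moment sum_b (phi b)^2 by 2 q^2, and a value b is of the form
   a t^2 for at most two t; hence (q - 1)^3 <= 4 q^2, i.e. q <= 6.  Likewise, if
   chi (x^6 + a) = 1 for all x != 0, then psi b := sum_x chi (x^6 + b) is at
   least q - 2 at the q - 1 points a t^6, which gives (q - 1)(q - 2)^2 <= 36 q^2,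
   i.e. q <= 40.  The remaining primes are checked by computation. *)

(* On ['F_p] this is [legendre p]; the two are used interchangeably below. *)
Definition qchar (F : finFieldType) (x : F) : int :=
  if x == 0 then 0 else if [exists y, y ^+ 2 == x] then 1 else -1.

Section PowerFibers.
Context {F : finFieldType}.

Lemma card_expr_eq_le [k : nat] (c : F) :
  (0 < k)%N -> (#|[pred t : F | t ^+ k == c]| <= k)%N.
Proof.
move=> k_gt0.
have := @max_poly_roots F ('X^k - c%:P) (enum [pred t : F | t ^+ k == c]).
rewrite size_XnsubC // ltnS -cardE; apply; last exact: enum_uniq.
  by rewrite -size_poly_eq0 size_XnsubC.
by apply/allP => t; rewrite mem_enum inE /root !hornerE subr_eq0.
Qed.

Lemma sum_dilate_expr_le [R : numDomainType] (k : nat) [c : F] (f : F -> R) :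
  (0 < k)%N -> c != 0 -> (forall b, 0 <= f b) ->
  \sum_t f (c * t ^+ k) <= k%:R * \sum_b f b.
Proof.
move=> k_gt0 c0 f_ge0.
rewrite [leLHS](partition_big (fun t => c * t ^+ k) predT) // mulr_sumr.
apply: ler_sum => b _; rewrite (eq_bigr (fun=> f b)) => [|t /eqP -> //].
rewrite sumr_const -[leLHS]mulr_natl; apply: (ler_wpM2r (f_ge0 b)); rewrite ler_nat.
apply: leq_trans _ (card_expr_eq_le (c^-1 * b) k_gt0); apply: subset_leq_card.
by apply/subsetP => t; rewrite !inE => /eqP <-; rewrite mulKf.
Qed.

End PowerFibers.

Section QuadraticCharacter.
Context {F : finFieldType} (oddF : odd #|F|).
Local Notation q := #|F|.
Local Notation m := (#|F|.-1)./2.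
Local Notation chi := (@qchar F).

Lemma card_gt2 : (2 < q)%N.
Proof.
move: oddF (finNzRing_gt1 F); rewrite leq_eqVlt => odd_q /orP[/eqP q2 | //].
by rewrite -q2 in odd_q.
Qed.

Let q_gt0 : (0 < q)%N := ltnW (finNzRing_gt1 F).

Lemma half_card_double : (m * 2 = q.-1)%N.
Proof.
have := odd_double_half q.-1; rewrite -muln2; move: oddF.
by rewrite -{1}(prednK q_gt0) /= => /negbTE ->; rewrite add0n.
Qed.

Lemma half_card_gt0 : (0 < m)%N.
Proof. have := half_card_double; have := card_gt2; lia. Qed.

Lemma expr_card_pred (x : F) : x != 0 -> x ^+ q.-1 = 1.
Proof.
move=> x0; apply: (mulfI x0).
by rewrite mulr1 -exprS prednK ?expf_card.
Qed.

Lemma two_neq0 : 2 != 0 :> F.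
Proof.
apply/negP => /eqP two0; have pchar2 : 2%N \in [pchar F] by rewrite inE two0 eqxx.
move: oddF (finNzRing_gt1 F); rewrite (card_pprimeChar pchar2).
by case: logn => [|n]; rewrite ?expnS ?oddM.
Qed.

Lemma sqr_expr_half_card (y : F) : y != 0 -> (y ^+ 2) ^+ m = 1.
Proof. by move=> y0; rewrite -exprM mulnC half_card_double expr_card_pred. Qed.

Lemma expr_half_card_eq1VN1 (x : F) : x != 0 -> (x ^+ m == 1) || (x ^+ m == -1).
Proof. by move=> x0; rewrite -sqrf_eq1 -exprM half_card_double expr_card_pred. Qed.

Lemma half_card_le_card_nonzero_sqr :
  (m <= #|[pred z : F | (z != 0%R) && [exists y, y ^+ 2 == z]]|)%N.
Proof.
set S := [pred z | _].
suff : (q.-1 <= 2 * #|S|)%N by have := half_card_double; lia.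
have -> : q.-1 = #|predC1 (0 : F)| by rewrite cardC1.
rewrite -sum1_card (partition_big (fun y : F => y ^+ 2) (mem S)) /=; last first.
  by move=> y; rewrite !inE sqrf_eq0 => -> /=; apply/existsP; exists y.
rewrite mulnC -sum_nat_const; apply: leq_sum => b _; rewrite sum1_card.
apply: leq_trans _ (card_expr_eq_le (k := 2) b isT); apply: subset_leq_card.
by apply/subsetP => y; rewrite !inE => /andP[].
Qed.

Lemma euler_criterion (x : F) : x != 0 -> [exists y, y ^+ 2 == x] = (x ^+ m == 1).
Proof.
move=> x0; set S := [pred z : F | (z != 0) && [exists y, y ^+ 2 == z]].
have SA : S \subset [pred z : F | z ^+ m == 1].
  apply/subsetP => z; rewrite !inE => /andP[z0 /existsP[y /eqP yz]].
  by rewrite -yz sqrf_eq0 in z0; rewrite -yz sqr_expr_half_card.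
have /subset_cardP/(_ SA)/(_ x) : #|S| = #|[pred z : F | z ^+ m == 1]|.
  apply/eqP; rewrite eqn_leq subset_leq_card //.
  exact: leq_trans (card_expr_eq_le 1 half_card_gt0) half_card_le_card_nonzero_sqr.
by rewrite !inE x0.
Qed.

Lemma qcharE (x : F) : chi x = if x == 0 then 0 else if x ^+ m == 1 then 1 else -1.
Proof. by rewrite /qchar; have [//|x0] := eqVneq x 0; rewrite euler_criterion. Qed.

Lemma qchar_eq1 (x : F) : (chi x == 1) = (x != 0) && (x ^+ m == 1).
Proof. by rewrite qcharE; case: (eqVneq x 0) => //= _; case: ifP. Qed.

Lemma qchar0 : chi 0 = 0.
Proof. by rewrite /qchar eqxx. Qed.

Lemma qchar1 : chi 1 = 1.
Proof. by rewrite qcharE oner_eq0 expr1n eqxx. Qed.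

Lemma qcharM (x y : F) : chi (x * y) = chi x * chi y.
Proof.
have N1_neq1 : ((-1 : F) == 1) = false.
  by apply/negbTE; rewrite eq_sym -addr_eq0; exact: two_neq0.
rewrite !qcharE mulf_eq0; have [_ | x0] /= := eqVneq x 0; first by rewrite mul0r.
have [_ | y0] /= := eqVneq y 0; first by rewrite mulr0.
rewrite exprMn.
by case/orP: (expr_half_card_eq1VN1 x x0) => /eqP ->;
  case/orP: (expr_half_card_eq1VN1 y y0) => /eqP ->;
  rewrite ?(mul1r, mulr1, mulrNN, eqxx, N1_neq1).
Qed.

Lemma qchar_expr2 (x : F) : x != 0 -> chi (x ^+ 2) = 1.
Proof. by move=> x0; rewrite qcharE sqrf_eq0 (negbTE x0) sqr_expr_half_card ?eqxx. Qed.

Lemma sqr_qchar (x : F) : x != 0 -> chi x ^+ 2 = 1.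
Proof. by move=> x0; rewrite expr2 -qcharM -expr2 qchar_expr2. Qed.

Lemma norm_qchar_le1 (x : F) : `|chi x| <= 1.
Proof. by rewrite qcharE; do 2?case: ifP. Qed.

Lemma sum_qchar : \sum_x chi x = 0.
Proof.
have [n n0 chi_n] : exists2 n : F, n != 0 & chi n = -1.
  have : ~~ (predC1 0 \subset [pred z : F | z ^+ m == 1]).
    apply/negP => /subset_leq_card/leq_trans/(_ (card_expr_eq_le 1 half_card_gt0)).
    by rewrite (cardC1 0 : _ = q.-1); have := half_card_double; have := card_gt2; lia.
  case/subsetPn => n; rewrite !inE => n0 nm.
  by exists n; rewrite // qcharE (negbTE n0) (negbTE nm).
have : \sum_x chi x = - \sum_x chi x.
  rewrite {1}(reindex_inj (mulfI n0)) /= -sumrN; apply: eq_bigr => x _.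
  by rewrite qcharM chi_n mulN1r.
by move/eqP; rewrite -addr_eq0 -mulr2n mulrn_eq0 => /eqP.
Qed.

Lemma sum_qchar_mul_add (c : F) : c != 0 -> \sum_b chi b * chi (c + b) = -1.
Proof.
move=> c0.
have split_b b : chi b * chi (c + b) = chi (1 + c / b) - (b == 0)%:R.
  have [-> | b0] := eqVneq b 0; first by rewrite qchar0 mul0r invr0 mulr0 addr0 qchar1.
  rewrite -qcharM (_ : b * (c + b) = b ^+ 2 * (1 + c / b)); last by field.
  by rewrite qcharM qchar_expr2 // mul1r subr0.
have inj : injective (fun b : F => 1 + c / b).
  by move=> x y /addrI /(mulfI c0) /invr_inj.
have -> : \sum_b chi b * chi (c + b) = \sum_b chi b - \sum_(b : F) (b == 0)%:R.
  by rewrite [\sum_b chi b](reindex_inj inj) -sumrB; apply: eq_bigr => b _; rewrite split_b.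
by rewrite sum_qchar (bigD1 0) //= big1 => [|b /negbTE -> //]; rewrite addr0 sub0r eqxx.
Qed.

Lemma qchar_correlation (u v : F) :
  \sum_b chi (u + b) * chi (v + b) = q%:R * (u == v)%:R - 1.
Proof.
rewrite (reindex_inj (addrI (- u))) /=.
under eq_bigr => b _ do rewrite addNKr addrA.
have [<- | uv] := eqVneq u v; last first.
  by rewrite sum_qchar_mul_add ?mulr0 ?sub0r // subr_eq0 eq_sym.
rewrite subrr (bigD1 0) //= qchar0 mul0r add0r mulr1.
rewrite (eq_bigr (fun=> 1)) => [|b b0]; last by rewrite add0r -expr2 sqr_qchar.
by rewrite sumr_const cardC1 -subn1 natrB.
Qed.

Lemma sum_sqr_qchar_sum (w : F -> int) (g : F -> F) :
  \sum_b (\sum_x w x * chi (g x + b)) ^+ 2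
    = q%:R * \sum_x \sum_y (g x == g y)%:R * (w x * w y) - (\sum_x w x) ^+ 2.
Proof.
transitivity (\sum_x \sum_y w x * w y * (q%:R * (g x == g y)%:R - 1)).
  under eq_bigr => b _ do rewrite expr2 big_distrlr /=.
  rewrite exchange_big; apply: eq_bigr => x _; rewrite exchange_big; apply: eq_bigr => y _.
  by rewrite -qchar_correlation mulr_sumr; apply: eq_bigr => b _; ring.
rewrite expr2 big_distrlr /= mulr_sumr -sumrB; apply: eq_bigr => x _.
by rewrite mulr_sumr -sumrB; apply: eq_bigr => y _; ring.
Qed.

Lemma sum_sqr_qchar_sum_le (w : F -> int) (g : F -> F) (k : nat) :
  (forall x, `|w x| <= 1) -> (forall x, (#|[pred y | g y == g x]| <= k)%N) ->
  \sum_b (\sum_x w x * chi (g x + b)) ^+ 2 <= (q ^ 2 * k)%:R.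
Proof.
move=> w_le1 g_fibers; rewrite sum_sqr_qchar_sum.
apply: le_trans (_ : q%:R * \sum_x \sum_y (g x == g y)%:R * (w x * w y) <= _).
  by rewrite lerBlDr lerDl sqr_ge0.
have -> : (q ^ 2 * k)%:R = q%:R * \sum_(x : F) k%:R :> int.
  by rewrite sumr_const -[_ *+ #|_|]mulr_natr -!natrM [(k * _)%N]mulnC mulnA.
rewrite ler_wpM2l //.
apply: ler_sum => x _.
apply: le_trans (_ : \sum_(y | g y == g x) (1 : int) <= _).
  rewrite [leRHS]big_mkcond; apply: ler_sum => y _; rewrite eq_sym.
  case: eqP => _; rewrite ?mul0r // mul1r.
  by rewrite (le_trans (ler_norm _)) // normrM mulr_ile1.
by rewrite sumr_const ler_nat; exact: g_fibers.
Qed.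

Lemma card_le6_of_qchar_add_div (a : F) :
  a != 0 -> (forall x, x != 0 -> chi (x + a / x) = 1) -> (q <= 6)%N.
Proof.
move=> a0 chi1.
pose phi b := \sum_x chi x * chi (x ^+ 2 + b).
have phi_a : phi a = q.-1%:R.
  rewrite /phi (bigD1 0) //= qchar0 mul0r add0r (eq_bigr (fun=> 1)) => [|x x0].
    by rewrite sumr_const cardC1.
  rewrite (_ : x ^+ 2 + a = x * (x + a / x)); last by field.
  by rewrite qcharM mulrA -expr2 sqr_qchar // chi1 // mul1r.
have phi_dilate t : t != 0 -> phi (a * t ^+ 2) = chi t * phi a.
  move=> t0; rewrite /phi (reindex_inj (mulfI t0)) mulr_sumr; apply: eq_bigr => x _.
  rewrite (_ : (t * x) ^+ 2 + a * t ^+ 2 = t ^+ 2 * (x ^+ 2 + a)); last by ring.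
  by rewrite (qcharM (t ^+ 2)) qcharM qchar_expr2 // mul1r mulrA.
have lower : (q.-1 * q.-1 ^ 2)%:R <= \sum_t phi (a * t ^+ 2) ^+ 2.
  rewrite (bigD1 0) //= -[leLHS]add0r; apply: lerD; first exact: sqr_ge0.
  rewrite (eq_bigr (fun=> (q.-1 ^ 2)%:R)) => [|t t0].
    by rewrite sumr_const cardC1 natrM mulr_natl.
  by rewrite phi_dilate // exprMn phi_a sqr_qchar // mul1r natrX.
have upper : \sum_t phi (a * t ^+ 2) ^+ 2 <= (2 * (q ^ 2 * 2))%:R.
  apply: le_trans (sum_dilate_expr_le 2 (fun b => phi b ^+ 2) isT a0 _) _.
    by move=> b; exact: sqr_ge0.
  rewrite natrM ler_wpM2l // /phi sum_sqr_qchar_sum_le // => x.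
    exact: norm_qchar_le1.
  exact: (card_expr_eq_le (k := 2) _ isT).
have := le_trans lower upper; rewrite ler_nat.
have := finNzRing_gt1 F; nia.
Qed.

Lemma card_le40_of_qchar_expr6_add (a : F) :
  a != 0 -> (forall x, x != 0 -> chi (x ^+ 6 + a) = 1) -> (q <= 40)%N.
Proof.
move=> a0 chi1.
pose psi b := \sum_x chi (x ^+ 6 + b).
have psi_a : q.-1%:R - 1 <= psi a.
  rewrite /psi (bigD1 0) //= (eq_bigr (fun=> 1)) => [|x x0]; last exact: chi1.
  rewrite sumr_const cardC1 addrC lerD2l.
  by rewrite qcharE; do 2?case: ifP.
have psi_dilate t : t != 0 -> psi (a * t ^+ 6) = psi a.
  move=> t0; rewrite /psi (reindex_inj (mulfI t0)); apply: eq_bigr => x _.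
  rewrite (_ : (t * x) ^+ 6 + a * t ^+ 6 = (t ^+ 3) ^+ 2 * (x ^+ 6 + a)); last by ring.
  by rewrite qcharM qchar_expr2 ?mul1r // expf_neq0.
have psi_a_ge0 : 0 <= q.-1%:R - 1 :> int.
  by rewrite subr_ge0 ler1n; have := card_gt2; lia.
have lower : q.-1%:R * (q.-1%:R - 1) ^+ 2 <= \sum_t psi (a * t ^+ 6) ^+ 2.
  rewrite (bigD1 0) //= -[leLHS]add0r; apply: lerD; first exact: sqr_ge0.
  rewrite (eq_bigr (fun=> psi a ^+ 2)) => [|t t0]; last by rewrite psi_dilate.
  rewrite sumr_const cardC1 -[leRHS]mulr_natl; apply: ler_wpM2l => //.
  by rewrite !expr2; apply: ler_pM.
have upper : \sum_t psi (a * t ^+ 6) ^+ 2 <= (6 * (q ^ 2 * 6))%:R.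
  apply: le_trans (sum_dilate_expr_le 6 (fun b => psi b ^+ 2) isT a0 _) _.
    by move=> b; exact: sqr_ge0.
  rewrite natrM ler_wpM2l // /psi.
  under eq_bigr => b _ do under eq_bigr => x _ do rewrite -[chi _]mul1r.
  rewrite (sum_sqr_qchar_sum_le (fun=> 1)) // => x.
  exact: (card_expr_eq_le (k := 6) _ isT).
have := le_trans lower upper; have := card_gt2; nia.
Qed.

Lemma exists_qchar_add_div_neq1 (a : F) :
  a != 0 -> (6 < q)%N -> exists2 x, x != 0 & chi (x + a / x) != 1.
Proof.
move=> a0 q_gt6; apply/exists_inP; apply: contraLR q_gt6.
rewrite negb_exists_in -leqNgt => /forall_inP chi1.
by apply: (card_le6_of_qchar_add_div a a0) => x /chi1 /negPn /eqP.
Qed.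

Lemma exists_qchar_expr6_add_neq1 (a : F) :
  a != 0 -> (40 < q)%N -> exists2 x, x != 0 & chi (x ^+ 6 + a) != 1.
Proof.
move=> a0 q_gt40; apply/exists_inP; apply: contraLR q_gt40.
rewrite negb_exists_in -leqNgt => /forall_inP chi1.
by apply: (card_le40_of_qchar_expr6_add a a0) => x /chi1 /negPn /eqP.
Qed.

End QuadraticCharacter.

(* Finite quantifiers over ['F_p] do not reduce under [vm_compute] (cardinals
   are locked), so the small cases enumerate ['F_p] from [iota] and test
   residuosity by Euler's criterion. *)
Definition Fp_enum (p : nat) : seq 'F_p := [seq i%:R | i <- iota 0 p].

Lemma mem_Fp_enum {p : nat} : prime p -> forall a : 'F_p, a \in Fp_enum p.
Proof.
move=> p_pr a; apply/mapP; exists (val a); last by rewrite natr_Zp.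
by rewrite mem_iota add0n -[X in (_ < X)%N](Fp_cast p_pr) ltn_ord.
Qed.

Lemma exists_legendre_neq1 (p : nat) (f : 'F_p -> 'F_p) (s : seq 'F_p) :
  prime p -> odd p -> has (fun x => (x != 0) && (f x ^+ (p.-1)./2 != 1)) s ->
  exists2 x, x != 0 & legendre (f x) != 1.
Proof.
move=> p_pr p_odd /hasP[x _ /andP[x0 fx]]; exists x => //.
have oddF : odd #|'F_p| by rewrite card_Fp.
by rewrite (qchar_eq1 oddF) card_Fp // negb_and fx orbT.
Qed.

Lemma add_div_small_primes :
  all (fun p => all (fun a : 'F_p => (a == 0) || ((p == 5)%N && (a == 3%:R)) ||
      has (fun x => (x != 0) && ((x + a / x) ^+ (p.-1)./2 != 1)) (Fp_enum p))
    (Fp_enum p)) [seq p <- iota 0 7 | prime p && odd p].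
Proof. by vm_compute. Qed.

Lemma expr6_add_small_primes :
  all (fun p => all (fun a : 'F_p => (a == 0) ||
      has (fun x => (x != 0) && ((x ^+ 6 + a) ^+ (p.-1)./2 != 1)) (Fp_enum p))
    (Fp_enum p)) [seq p <- iota 0 41 | [&& prime p, odd p & p \notin [:: 7; 13]]].
Proof. by vm_compute. Qed.

Lemma exists_legendre_add_div_neq1_small (q : nat) (a : 'F_q) :
  prime q -> odd q -> (q <= 6)%N -> a != 0 -> ~~ ((q == 5)%N && (a == 3%:R)) ->
  exists2 x, x != 0 & legendre (x + a / x) != 1.
Proof.
move=> q_pr q_odd q_le6 a0 q5a3.
have /allP/(_ q) := add_div_small_primes.
rewrite mem_filter q_pr q_odd mem_iota leq0n ltnS q_le6 => /(_ isT).
move=> /allP/(_ a (mem_Fp_enum q_pr a)).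
by rewrite (negbTE a0) (negbTE q5a3); exact: exists_legendre_neq1.
Qed.

Lemma exists_legendre_expr6_add_neq1_small (q : nat) (a : 'F_q) :
  prime q -> odd q -> (q <= 40)%N -> q \notin [:: 7; 13] -> a != 0 ->
  exists2 x, x != 0 & legendre (x ^+ 6 + a) != 1.
Proof.
move=> q_pr q_odd q_le40 q_713 a0.
have /allP/(_ q) := expr6_add_small_primes.
rewrite mem_filter q_pr q_odd q_713 mem_iota leq0n ltnS q_le40 => /(_ isT).
move=> /allP/(_ a (mem_Fp_enum q_pr a)).
by rewrite (negbTE a0); exact: exists_legendre_neq1.
Qed.

Theorem lemma2 (q : nat) (hq : prime q) (hodd : odd q)
    (a : 'F_q) (ha : a \is a GRing.unit) :
  ((q != 5)%N \/ (q = 5%N /\ a != 3%:R) ->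
     exists2 x : 'F_q, x \is a GRing.unit & legendre (x + a / x) != 1)
  /\
  (~~ (q \in [:: 7; 13])%N ->
     exists2 x : 'F_q, x \is a GRing.unit & legendre (x ^+ 6 + a) != 1).
Proof.
have a0 : a != 0 by rewrite -unitfE.
have oddF : odd #|'F_q| by rewrite card_Fp.
have unit_of_neq0 (P : 'F_q -> Prop) :
    (exists2 x, x != 0 & P x) -> exists2 x, x \is a GRing.unit & P x.
  by case=> x x0 Px; exists x; rewrite ?unitfE.
split=> exc; apply: unit_of_neq0.
- have [q_le6 | q_gt6] := leqP q 6.
    apply: exists_legendre_add_div_neq1_small => //.
    by case: exc => [/negbTE -> | [_ /negbTE ->]]; rewrite ?andbF.
  by apply: (exists_qchar_add_div_neq1 oddF); rewrite ?card_Fp.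
- have [q_le40 | q_gt40] := leqP q 40.
    exact: exists_legendre_expr6_add_neq1_small.
  by apply: (exists_qchar_expr6_add_neq1 oddF); rewrite ?card_Fp.
Qed.
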